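(* Let $\varphi(x)=\sum_{i\ge0}\gamma_ix^i\in\mathbb{K}[[x]]$ and let $k\ge0$ be an integer. Then $$\sum_{i=0}^m(-1)^i\binom{2m+2k-1}{m-i}\binom{m+i}{i}\gamma_{m+i-1}=0$$ for each $m\ge1$ if and only if there is a power series $\psi(y)\in\mathbb{K}[[y]]$ such that $$\sum_{i\ge0}\gamma_ix^i=\frac1x\cdot\frac{d^{2k-1}}{dx^{2k-1}}\left[\frac{x^{2k}}{1-x}\,\psi\!\left(\frac{x^2}{1-x}\right)\right],$$ where for $k=0$ the operator $\frac{d^{-1}}{dx^{-1}}$ means formal term-by-term integration with vanishing constant of integration. If $k\ge1$, this last condition is equivalent to the existence of $\rho(y)\in\mathbb{K}[[y]]$ with $$\sum_{i\ge0}\gamma_ix^i=\frac1x\cdot\frac{d^{2k-1}}{dx^{2k-1}}\left[x^{2k-2}\rho\!\left(\frac{x^2}{1-x}\right)\right].$$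
   Context: $\mathbb{K}\in\{\mathbb{Q},\mathbb{R},\mathbb{C}\}$. All operations (composition, differentiation, integration) are formal operations on formal power series. *)

(* Formal power series over a field K are represented by
   their coefficient sequences  nat -> K  (f n = coefficient of x^n). *)
From HB Require Import structures.
From mathcomp Require Import all_boot all_order all_algebra.
Set Implicit Arguments. Unset Strict Implicit. Unset Printing Implicit Defensive.
Import Order.TTheory GRing.Theory Num.Theory.
Local Open Scope ring_scope.

Section FPS.
Variable K : fieldType.

Definition fps := nat -> K.

Definition fps_Xn (n : nat) : fps := fun i => if i == n then 1 else 0.

Definition fps_geom : fps := fun _ => 1.

Definition fps_mul (f g : fps) : fps :=
  fun n => \sum_(i < n.+1) f i * g (n - i)%N.

Definition fps_exp (f : fps) (j : nat) : fps := iter j (fps_mul f) (fps_Xn 0).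

(* composition psi(u(x)), meaningful when u has zero constant term: the
   coefficient of x^n only involves psi_0 .. psi_n since u^j has valuation >= j *)
Definition fps_comp (psi u : fps) : fps :=
  fun n => \sum_(j < n.+1) psi j * fps_exp u j n.

(* the series x^2/(1-x) = sum_{i>=2} x^i *)
Definition fps_u : fps := fun i => if (2 <= i)%N then 1 else 0.

Definition fps_deriv (f : fps) : fps := fun n => f n.+1 *+ n.+1.

Definition fps_integ (f : fps) : fps :=
  fun n => if n is n'.+1 then f n' / n%:R else 0.

(* the operator d^{2k-1}/dx^{2k-1}; for k = 0 it is integration d^{-1}/dx^{-1} *)
Definition fps_Dodd (k : nat) (f : fps) : fps :=
  if k is k'.+1 then iter (2 * k').+1 fps_deriv f else fps_integ f.

End FPS.

From HB Require Import structures.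
From mathcomp Require Import all_boot all_order all_algebra.
From mathcomp Require Import zify ring.
From Stdlib Require Import FunctionalExtensionality.
Set Implicit Arguments. Unset Strict Implicit. Unset Printing Implicit Defensive.
Import Order.TTheory GRing.Theory Num.Theory.
Local Open Scope ring_scope.

(* Let u = x^2/(1-x). The coefficients of u^j/(1-x) are 'C(p - j, j), so
   x^(2k)/(1-x) psi(u) has coefficient binsum psi p = sum_l psi_l 'C(p - l, l)
   at x^(p+2k), while d^(2k-1)/dx^(2k-1) (integration if k = 0) maps x^(p+2k)
   to (p+2k)!/(p+1)! x^(p+1). The series identity thus says exactly
   gamma_p = (p+2k)!/(p+1)! binsum psi p. Substituting this, the m-th sum is,
   up to a nonzero factor, the m-th alternating binomial difference of
   i |-> binsum psi (m-1+i); there 'C(m-1+i-l, l) is a polynomial of degree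
   l in i for l < m and vanishes for l >= m, so the difference is zero.
   Conversely, the values gamma_(2j) determine psi through a unitriangular
   system, and the m-th condition then fixes gamma_(2m-1) in terms of lower
   coefficients. For k >= 1, rho(y) = rho_0 + y rho'(y) gives
   x^(2k-2) rho(u) = rho_0 x^(2k-2) + x^(2k)/(1-x) rho'(u), and the derivative
   of order 2k-1 kills x^(2k-2). *)

Lemma sum_ord_zero_tail (V : nmodType) (F : nat -> V) n m : (n <= m)%N ->
  (forall l, (n <= l < m)%N -> F l = 0) ->
  \sum_(l < m) F l = \sum_(l < n) F l.
Proof.
move=> le_nm F0; rewrite -!(big_mkord xpredT F) (big_cat_nat (leq0n n) le_nm).
by rewrite /= [X in _ + X]big_nat_cond [X in _ + X]big1 ?addr0 // => l /andP[/F0].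
Qed.

Section FiniteDifference.
Variable R : pzRingType.
Implicit Type f : nat -> R.

Definition fdiff m f : R := \sum_(i < m.+1) (-1) ^+ i * ('C(m, i))%:R * f i.

Lemma fdiffS m f : fdiff m.+1 f = fdiff m f - fdiff m (f \o S).
Proof.
have -> : fdiff m f = f 0%N + \sum_(i < m.+1) (-1) ^+ i.+1 * ('C(m, i.+1))%:R * f i.+1.
  rewrite /fdiff big_ord_recl expr0 bin0 !mul1r [in RHS]big_ord_recr /=.
  by rewrite bin_small // mulr0n mulr0 mul0r addr0.
rewrite {1}/fdiff big_ord_recl expr0 bin0 !mul1r -addrA; congr (_ + _).
rewrite /fdiff -sumrB; apply: eq_bigr => i _ /=.
by rewrite binS natrD exprS !mulN1r mulrDr mulrDl !mulNr.
Qed.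

Lemma fdiff_binomial m a d : (d < m)%N -> fdiff m (fun i => ('C(i + a, d))%:R) = 0.
Proof.
elim: m a d => [//|m IH] a d lt_dm; rewrite fdiffS; case: d lt_dm => [|d] lt_dm.
  by apply/eqP; rewrite subr_eq0; apply/eqP/eq_bigr => i _; rewrite !bin0.
rewrite -[RHS]oppr0 -(IH a d) // /fdiff -sumrB -sumrN; apply: eq_bigr => i _ /=.
by rewrite addSn binS natrD mulrDr opprD addNKr.
Qed.

End FiniteDifference.

Section TriangularSystem.
Variables (R : pzRingType) (a : nat -> nat -> R) (t : nat -> R).
Hypothesis a_diag : forall j, a j j = 1.

Fixpoint trisol_upto n : nat -> R :=
  if n is n'.+1 then fun l =>
    if l == n' then t n' - \sum_(i < n') trisol_upto n' i * a n' i
    else trisol_upto n' l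
  else fun _ => 0.

Definition trisol j := trisol_upto j.+1 j.

Lemma trisol_uptoE n l : (l < n)%N -> trisol_upto n l = trisol l.
Proof.
elim: n => [//|n IH] lt_ln /=; case: eqP => [->|neq_ln]; first by rewrite /trisol /= eqxx.
by apply: IH; rewrite ltn_neqAle (introN eqP neq_ln) -ltnS.
Qed.

Lemma trisolP j : \sum_(l < j.+1) trisol l * a j l = t j.
Proof.
rewrite big_ord_recr /= a_diag mulr1 {2}/trisol /= eqxx.
by under eq_bigr => i _ do rewrite -(@trisol_uptoE j i (ltn_ord i)); rewrite addrC subrK.
Qed.

End TriangularSystem.

Section Fps.
Variable K : fieldType.
Implicit Types (f h psi : fps K).

Lemma fps_mulC f h : fps_mul f h = fps_mul h f.
Proof.
apply: functional_extensionality => n; rewrite /fps_mul (reindex_inj rev_ord_inj).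
apply: eq_bigr => i _; have le_in : (i <= n)%N by rewrite -ltnS.
by rewrite /= subSS subKn // mulrC.
Qed.

Lemma coef_fps_mulXn d f n :
  fps_mul (fps_Xn K d) f n = if (d <= n)%N then f (n - d)%N else 0.
Proof.
rewrite /fps_mul /fps_Xn; case: leqP => [le_dn | lt_nd].
  rewrite (bigD1 (Ordinal (le_dn : (d < n.+1)%N))) //= eqxx mul1r big1 ?addr0 //.
  by move=> i; rewrite -val_eqE /= eq_sym => /negbTE->; rewrite mul0r.
rewrite big1 // => i _; case: eqP => [ei|_]; last by rewrite mul0r.
by have := ltn_ord i; lia.
Qed.

Lemma fps_mulX_eq f h c : h 0%N = 0 -> (forall p, h p.+1 = c p) ->
  fps_mul (fps_Xn K 1) f = h <-> f =1 c.
Proof.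
move=> h0 hS; have coefX n : fps_mul (fps_Xn K 1) f n = if n is n'.+1 then f n' else 0.
  by rewrite coef_fps_mulXn; case: n => // n; rewrite subn1.
split=> [eq_h p | eq_fc]; first by rewrite -hS -eq_h coefX.
by apply: functional_extensionality => -[|p]; rewrite coefX ?h0 // hS eq_fc.
Qed.

Lemma coef_fps_mul_Xn_geom d f n :
  fps_mul (fps_mul (fps_Xn K d) (fps_geom K)) f n =
  if (d <= n)%N then \sum_(i < (n - d).+1) f i else 0.
Proof.
have -> : fps_mul (fps_Xn K d) (fps_geom K) = fun i => if (d <= i)%N then 1 else 0.
  by apply: functional_extensionality => i; rewrite coef_fps_mulXn.
rewrite fps_mulC /fps_mul.
case: leqP => [le_dn | lt_nd].
  pose F i := f i * (if (d <= n - i)%N then 1 else 0).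
  rewrite (@sum_ord_zero_tail _ F (n - d).+1); first last.
  - by move=> l /andP[lo hi]; rewrite /F leqNgt (_ : n - l < d)%N ?mulr0 //; lia.
  - by lia.
  apply: eq_bigr => i _; have lt_i := ltn_ord i.
  by rewrite /F (_ : d <= n - i)%N ?mulr1 //; lia.
rewrite big1 // => i _; have lt_i := ltn_ord i.
by rewrite leqNgt (_ : n - i < d)%N ?mulr0 //; lia.
Qed.

Definition fps_u_pow j : fps K := fps_exp (fps_u K) j.
Arguments fps_u_pow : simpl never.

Lemma fps_u_powS j n :
  fps_u_pow j.+1 n = \sum_(a < n.+1) fps_u K a * fps_u_pow j (n - a)%N.
Proof. by []. Qed.

Lemma fps_u_pow_lt j n : (n < 2 * j)%N -> fps_u_pow j n = 0.
Proof.
elim: j n => [//|j IH] n lt_n; rewrite fps_u_powS big1 // => a _.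
rewrite /fps_u; case: (leqP 2 a) => [le2a | _]; last by rewrite mul0r.
by rewrite IH ?mulr0 //; have := ltn_ord a; lia.
Qed.

Lemma fps_u_powSS j n :
  fps_u_pow j.+1 n.+2 = \sum_(i < n.+1) fps_u_pow j i.
Proof.
rewrite fps_u_powS 2!big_ord_recl /= /fps_u /= !mul0r !add0r.
rewrite (reindex_inj rev_ord_inj); apply: eq_bigr => i _ /=.
by rewrite mul1r; congr fps_u_pow; have := ltn_ord i; rewrite /bump /=; lia.
Qed.

(* u^j/(1-x) = x^(2j)/(1-x)^(j+1) has coefficients 'C(p - j, j). *)
Lemma sum_fps_u_pow j p :
  \sum_(i < p.+1) fps_u_pow j i = ('C(p - j, j))%:R.
Proof.
elim: j p => [|j IH] p.
  by rewrite big_ord_recl big1 ?addr0 ?bin0 // => i _; rewrite /fps_u_pow.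
elim: p => [|p IHp]; first by rewrite big_ord1 fps_u_pow_lt.
rewrite big_ord_recr /= IHp; case: p IHp => [|p] _.
  by rewrite (@fps_u_pow_lt j.+1 1) ?addr0 ?bin0n // mulnS.
rewrite fps_u_powSS IH -natrD !subSS; congr _%:R.
have [le_jp | lt_pj] := leqP j p; first by rewrite subSn // binS addnC.
case: j lt_pj {IH} => // j lt_pj.
have -> : (p.+1 - j.+1 = 0)%N by lia.
have -> : (p - j.+1 = 0)%N by lia.
by rewrite !bin0n.
Qed.

Definition binsum psi p : K := \sum_(l < p.+1) psi l * ('C(p - l, l))%:R.

Lemma sum_comp_fps_u psi p :
  \sum_(i < p.+1) fps_comp psi (fps_u K) i = binsum psi p.
Proof.
transitivity (\sum_(i < p.+1) \sum_(l < p.+1) psi l * fps_u_pow l i).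
  apply: eq_bigr => i _.
  rewrite [RHS](@sum_ord_zero_tail _ (fun l => psi l * fps_u_pow l i) i.+1) //.
  by move=> l /andP[lt_il _]; rewrite fps_u_pow_lt ?mulr0 //; lia.
by rewrite exchange_big; apply: eq_bigr => l _; rewrite -mulr_sumr sum_fps_u_pow.
Qed.

Lemma coef_comp_fps_uSS psi p :
  fps_comp psi (fps_u K) p.+2 = binsum (psi \o S) p.
Proof.
rewrite (_ : fps_comp _ _ _ = \sum_(j < p.+3) psi j * fps_u_pow j p.+2) //.
rewrite big_ord_recl {1}/fps_u_pow /= /fps_Xn /= mulr0 add0r big_ord_recr /=.
rewrite fps_u_powSS sum_fps_u_pow bin_small ?mulr0n ?mulr0 ?addr0; last by lia.
by apply: eq_bigr => i _; rewrite fps_u_powSS sum_fps_u_pow.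
Qed.

Lemma coef_comp_fps_u1 psi : fps_comp psi (fps_u K) 1 = 0.
Proof.
rewrite (_ : fps_comp _ _ _ = \sum_(j < 2) psi j * fps_u_pow j 1) //.
rewrite !big_ord_recr big_ord0 /= (@fps_u_pow_lt 1 1) //.
by rewrite /fps_u_pow /= /fps_Xn /= !mulr0 !addr0.
Qed.

Lemma fdiff_binsum psi m : fdiff m.+1 (fun i => binsum psi (m + i)) = 0.
Proof.
have widen i : (i < m.+2)%N ->
    binsum psi (m + i) = \sum_(l < (2 * m).+2) psi l * ('C(m + i - l, l))%:R.
  move=> lt_i; pose F l := psi l * ('C(m + i - l, l))%:R.
  rewrite (@sum_ord_zero_tail _ F (m + i).+1) //.
    by lia.
  by move=> l /andP[le_l _]; rewrite /F bin_small ?mulr0n ?mulr0 //; lia.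
rewrite /fdiff; under eq_bigr => i _ do rewrite (widen i (ltn_ord i)) mulr_sumr.
rewrite exchange_big big1 // => l _; have [le_lm | lt_ml] := leqP l m.
  transitivity (psi l * fdiff m.+1 (fun i => ('C(i + (m - l), l))%:R)).
    rewrite /fdiff mulr_sumr; apply: eq_bigr => i _.
    by rewrite mulrCA (_ : m + i - l = i + (m - l))%N //; lia.
  by rewrite fdiff_binomial ?mulr0.
rewrite big1 // => i _; have lt_i := ltn_ord i.
by rewrite (@bin_small (m + i - l)) ?mulr0n ?mulr0 //; lia.
Qed.

Lemma coef_iter_fps_deriv t f n :
  iter t (@fps_deriv K) f n = f (n + t)%N *+ (n + t) ^_ t.
Proof.
elim: t n => [|t IH] n; first by rewrite addn0 ffactn0.
rewrite iterS /fps_deriv IH -mulrnA ffactnSr.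
have -> : (n.+1 + t = n + t.+1)%N by rewrite addSnnS.
by rewrite addnS subSn ?leq_addl // addnK.
Qed.

End Fps.

Section CharZero.
Variable K : numFieldType.
Implicit Types (f psi rho gamma : fps K).

Lemma natr_fact_neq0 n : (n`!)%:R != 0 :> K.
Proof. by rewrite pnatr_eq0 -lt0n fact_gt0. Qed.

Lemma natr_binomial n r : (r <= n)%N ->
  ('C(n, r))%:R = (n`!)%:R / ((r`!)%:R * ((n - r)`!)%:R) :> K.
Proof.
move=> le_rn; rewrite -(bin_fact le_rn) !natrM mulfK //.
by rewrite mulf_neq0 ?natr_fact_neq0.
Qed.

Definition dodd_coef k p : K := ((p + 2 * k)`!)%:R / ((p.+1)`!)%:R.

Lemma dodd_coef_neq0 k p : dodd_coef k p != 0.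
Proof. by rewrite mulf_neq0 ?invr_eq0 ?natr_fact_neq0. Qed.

Lemma coef_fps_DoddS k f p : fps_Dodd k f p.+1 = dodd_coef k p * f (p + 2 * k)%N.
Proof.
rewrite /fps_Dodd /dodd_coef; case: k => [|k].
  rewrite /fps_integ muln0 addn0 factS natrM; field.
  by rewrite natr_fact_neq0 addrC natr1 pnatr_eq0.
rewrite coef_iter_fps_deriv (_ : p.+1 + (2 * k).+1 = p + 2 * k.+1)%N; last by lia.
rewrite -[LHS]mulr_natr [RHS]mulrC; congr (_ * _).
apply: (canRL (mulfK (natr_fact_neq0 _))); rewrite -natrM.
have le_k : ((2 * k).+1 <= p + 2 * k.+1)%N by lia.
by rewrite -(_ : p + 2 * k.+1 - (2 * k).+1 = p.+1)%N ?ffact_fact //; lia.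
Qed.

Lemma coef0_fps_Dodd k f : ((0 < k)%N -> f (2 * k).-1 = 0) -> fps_Dodd k f 0 = 0.
Proof.
case: k => [//|k] f0; rewrite /fps_Dodd coef_iter_fps_deriv.
by rewrite (_ : 0 + (2 * k).+1 = (2 * k.+1).-1)%N ?f0 ?mul0rn //; lia.
Qed.

Definition phi_coef k psi p : K := dodd_coef k p * binsum psi p.

Definition psi_series k psi : fps K :=
  fps_mul (fps_mul (fps_Xn K (2 * k)) (fps_geom K)) (fps_comp psi (fps_u K)).

Definition rho_series k rho : fps K :=
  fps_mul (fps_Xn K (2 * k - 2)) (fps_comp rho (fps_u K)).

Lemma mulX_eq_Dodd_psi k gamma psi :
  fps_mul (fps_Xn K 1) gamma = fps_Dodd k (psi_series k psi) <->
  gamma =1 phi_coef k psi.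
Proof.
apply: fps_mulX_eq => [|p].
  apply: coef0_fps_Dodd => k_gt0; rewrite /psi_series coef_fps_mul_Xn_geom.
  by rewrite leqNgt (_ : (2 * k).-1 < 2 * k)%N //; lia.
rewrite coef_fps_DoddS /psi_series coef_fps_mul_Xn_geom.
by rewrite leq_addl addnK sum_comp_fps_u.
Qed.

Lemma mulX_eq_Dodd_rho k gamma rho :
  fps_mul (fps_Xn K 1) gamma = fps_Dodd k.+1 (rho_series k.+1 rho) <->
  gamma =1 phi_coef k.+1 (rho \o S).
Proof.
have shift n : (n + 2 * k.+1 - (2 * k.+1 - 2) = n.+2)%N by lia.
apply: fps_mulX_eq => [|p].
  apply: coef0_fps_Dodd => _; rewrite /rho_series coef_fps_mulXn.
  rewrite (_ : 2 * k.+1 - 2 <= (2 * k.+1).-1)%N; last by lia.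
  rewrite (_ : (2 * k.+1).-1 - (2 * k.+1 - 2) = 1)%N; last by lia.
  exact: coef_comp_fps_u1.
rewrite coef_fps_DoddS /rho_series coef_fps_mulXn.
rewrite (_ : 2 * k.+1 - 2 <= p + 2 * k.+1)%N; last by lia.
by rewrite shift coef_comp_fps_uSS.
Qed.

Definition cond_sum k m gamma : K :=
  \sum_(i < m.+1)
    (-1) ^+ i * ('C((2 * m + 2 * k - 1)%N, (m - i)%N))%:R
      * ('C((m + i)%N, i))%:R * gamma (m + i - 1)%N.

Lemma eq_cond_sum k m gamma1 gamma2 :
  gamma1 =1 gamma2 -> cond_sum k m gamma1 = cond_sum k m gamma2.
Proof. by move=> eq_gamma; apply: eq_bigr => i _; rewrite eq_gamma. Qed.

Lemma cond_sumB k m gamma1 gamma2 :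
  cond_sum k m (fun p => gamma1 p - gamma2 p) =
  cond_sum k m gamma1 - cond_sum k m gamma2.
Proof. by rewrite /cond_sum -sumrB; apply: eq_bigr => i _; rewrite mulrBr. Qed.

Lemma cond_sum_phi_coef k psi m :
  cond_sum k m.+1 (phi_coef k psi) =
  ((2 * m + 2 * k).+1`!)%:R / ((m.+1`!)%:R * (m.+1`!)%:R) *
    fdiff m.+1 (fun i => binsum psi (m + i)).
Proof.
rewrite /cond_sum /fdiff mulr_sumr; apply: eq_bigr => i _.
have le_i : (i <= m.+1)%N by rewrite -ltnS.
rewrite (_ : 2 * m.+1 + 2 * k - 1 = (2 * m + 2 * k).+1)%N; last by lia.
rewrite (_ : m.+1 + i - 1 = m + i)%N; last by lia.
rewrite natr_binomial; last by lia.
rewrite (natr_binomial (_ : i <= m.+1 + i)%N); last by lia.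
rewrite (natr_binomial le_i) /phi_coef /dodd_coef.
rewrite (_ : (2 * m + 2 * k).+1 - (m.+1 - i) = m + i + 2 * k)%N; last by lia.
rewrite (_ : m.+1 + i - i = m.+1)%N -?addSn; last by lia.
by field; rewrite !natr_fact_neq0.
Qed.

Lemma cond_sum_phi_coef_eq0 k psi m : (0 < m)%N -> cond_sum k m (phi_coef k psi) = 0.
Proof. by case: m => // m _; rewrite cond_sum_phi_coef fdiff_binsum mulr0. Qed.

(* In the m-th sum only gamma_(m-1), ..., gamma_(2m-1) occur, the last one
   with a nonzero coefficient. *)
Lemma cond_sum_even_eq0 k gamma :
  (forall m, (0 < m)%N -> cond_sum k m gamma = 0) ->
  (forall j, gamma (2 * j)%N = 0) -> gamma =1 (fun=> 0).
Proof.
move=> cond even p; elim/ltn_ind: p => p IH.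
move: (odd_double_half p); case: (odd p) => /= [p_eq | <-]; last by rewrite -mul2n even.
set j := p./2 in p_eq; have := cond j.+1 isT.
rewrite /cond_sum big_ord_recr /= big1 ?add0r; last first.
  by move=> i _; have lt_i := ltn_ord i; rewrite IH ?mulr0 //; lia.
rewrite subnn bin0 (_ : j.+1 + j.+1 - 1 = p)%N; last by lia.
move/eqP; rewrite mulf_eq0 => /orP[|/eqP //].
by rewrite !mulf_eq0 signr_eq0 oner_eq0 pnatr_eq0 eqn0Ngt bin_gt0 leq_addl.
Qed.

Lemma cond_sum_solvable k gamma :
  (forall m, (0 < m)%N -> cond_sum k m gamma = 0) ->
  exists psi, gamma =1 phi_coef k psi.
Proof.
move=> cond.
pose a j l : K := ('C(2 * j - l, l))%:R.
pose t j := gamma (2 * j)%N / dodd_coef k (2 * j).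
have a_diag j : a j j = 1 by rewrite /a (_ : 2 * j - j = j)%N ?binn //; lia.
have even j : phi_coef k (trisol a t) (2 * j) = gamma (2 * j)%N.
  rewrite /phi_coef /binsum.
  rewrite (@sum_ord_zero_tail _ (fun l => trisol a t l * a j l) j.+1) //.
  - by rewrite (trisolP _ a_diag) /t mulrC divfK ?dodd_coef_neq0.
  - by lia.
  - by move=> l /andP[lt_jl _]; rewrite /a bin_small ?mulr0n ?mulr0 //; lia.
exists (trisol a t) => p; apply/eqP; rewrite -subr_eq0; apply/eqP.
move: p; apply: (cond_sum_even_eq0 (k := k)) => [m m_gt0 | j]; last by rewrite even subrr.
by rewrite cond_sumB cond // cond_sum_phi_coef_eq0 // subr0.
Qed.

End CharZero.

Theorem lemma4p3 (K : numFieldType) (gamma : nat -> K) (k : nat) :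
  ((forall m : nat, (1 <= m)%N ->
      \sum_(i < m.+1)
        (-1) ^+ i * ('C((2 * m + 2 * k - 1)%N, (m - i)%N))%:R
          * ('C((m + i)%N, i))%:R * gamma (m + i - 1)%N = 0)
   <->
   (exists psi : fps K,
      fps_mul (fps_Xn K 1) gamma =
      fps_Dodd k (fps_mul (fps_mul (fps_Xn K (2 * k)) (fps_geom K))
                          (fps_comp psi (fps_u K)))))
  /\
  ((1 <= k)%N ->
   ((exists psi : fps K,
      fps_mul (fps_Xn K 1) gamma =
      fps_Dodd k (fps_mul (fps_mul (fps_Xn K (2 * k)) (fps_geom K))
                          (fps_comp psi (fps_u K))))
    <->
    (exists rho : fps K,
      fps_mul (fps_Xn K 1) gamma =
      fps_Dodd k (fps_mul (fps_Xn K (2 * k - 2)) (fps_comp rho (fps_u K)))))).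
Proof.
split.
  split=> [/cond_sum_solvable [psi eq_gamma] | [psi /mulX_eq_Dodd_psi eq_gamma] m m_gt0].
    by exists psi; apply/mulX_eq_Dodd_psi.
  by rewrite -/(cond_sum k m gamma) (eq_cond_sum _ _ eq_gamma) cond_sum_phi_coef_eq0.
case: k => [//|k] _.
split=> [[psi /mulX_eq_Dodd_psi eq_gamma] | [rho /mulX_eq_Dodd_rho eq_gamma]].
  by exists (fun j => if j is j'.+1 then psi j' else 0); apply/mulX_eq_Dodd_rho.
by exists (rho \o S); apply/mulX_eq_Dodd_psi.
Qed.
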